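(* Let $\gamma > 1$ and let $I$ be a $\gamma$-stable instance of the metric Steiner tree problem with optimal Steiner tree $\mathrm{OPT}$. Let $H$ be a subgraph of $\mathrm{OPT}$ with at least one edge, let $ab$ be an edge of $H$, and let $c \in V(\mathrm{OPT}) \setminus V(H)$ satisfy $w_{bc} < \gamma(\gamma - 1) w_{ab}$. Then $w_{bc} < \frac{w_{ab}}{\gamma - 1}$ and $w_{ab} < \frac{w_{bc}}{\gamma - 1}$.
   Context: An instance of the metric Steiner tree problem consists of a finite set $V$ of points of a metric space with metric $d$, a set $T \subseteq V$ of terminals, and the complete graph on $V$ with edge weights $w_{uv} = d(u,v)$. Points of $V \setminus T$ are Steiner points. A Steiner tree is a tree in this complete graph whose vertex set contains all of $T$; its weight is the sum of its edge weights. For $\gamma > 1$, the instance is $\gamma$-stable if it has a minimum-weight Steiner tree $\mathrm{OPT}$ such that for every $w' : V \times V \to \mathbb{R}_{\ge 0}$ with $w_{uv} \le w'_{uv} \le \gamma w_{uv}$ for all $u,v$, every minimum-weight Steiner tree with respect to $w'$ equals $\mathrm{OPT}$. $V(\mathrm{OPT})$ and $V(H)$ denote vertex sets. *)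

From HB Require Import structures.
From mathcomp Require Import all_boot all_order all_algebra.
Set Implicit Arguments. Unset Strict Implicit. Unset Printing Implicit Defensive.
Import Order.TTheory GRing.Theory Num.Theory.
Local Open Scope ring_scope.

Section Steiner.
Variable V : finType.

(* A graph on (a subset of) V: vertex set and set of edges; edges are
   2-element subsets of V (simple undirected graphs, subgraphs of the
   complete graph on V). *)
Definition graph := ({set V} * {set {set V}})%type.

Definition is_graph (G : graph) : Prop :=
  forall e, e \in G.2 -> #|e| = 2%N /\ e \subset G.1.

Definition adj (E : {set {set V}}) : rel V := fun x y => [set x; y] \in E.

Definition connected_graph (G : graph) : Prop :=
  forall x y, x \in G.1 -> y \in G.1 -> connect (adj G.2) x y.

Definition acyclic_graph (G : graph) : Prop :=
  forall s : seq V, uniq s -> (2 < size s)%N -> ~~ cycle (adj G.2) s.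

Definition is_tree (G : graph) : Prop :=
  [/\ is_graph G, G.1 != set0, connected_graph G & acyclic_graph G].

Definition steiner_tree (Tm : {set V}) (G : graph) : Prop :=
  is_tree G /\ Tm \subset G.1.

Definition subgraph (H G : graph) : Prop :=
  [/\ is_graph H, H.1 \subset G.1 & H.2 \subset G.2].

Variable R : realFieldType.

Definition is_metric (d : V -> V -> R) : Prop :=
  [/\ forall x y, d x y = 0 <-> x = y,
      forall x y, d x y = d y x &
      forall x y z, d x z <= d x y + d y z].

Definition weight (W : {set V} -> R) (G : graph) : R := \sum_(e in G.2) W e.

Definition min_steiner (Tm : {set V}) (W : {set V} -> R) (G : graph) : Prop :=
  steiner_tree Tm G /\
  forall G', steiner_tree Tm G' -> weight W G <= weight W G'.

Definition stable_opt (gamma : R) (Tm : {set V}) (W : {set V} -> R)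
    (OPT : graph) : Prop :=
  min_steiner Tm W OPT /\
  forall W' : {set V} -> R,
    (forall e : {set V}, #|e| = 2%N -> W e <= W' e <= gamma * W e) ->
    forall G, min_steiner Tm W' G -> G = OPT.

End Steiner.

From HB Require Import structures.
From mathcomp Require Import all_boot all_order all_algebra.
From mathcomp Require Import lra.
From Stdlib Require Import Classical.
Set Implicit Arguments. Unset Strict Implicit. Unset Printing Implicit Defensive.
Import Order.TTheory GRing.Theory Num.Theory.
Local Open Scope ring_scope.

(* Stability gives an exchange inequality: if uv is an edge of OPT and x, y
   lie on the u- and v-sides of OPT - uv (with xy <> uv), then
   gamma w(uv) < w(xy).  Otherwise, once the weight of uv is scaled by gamma, a
   spanning tree of OPT - uv + xy is as light as OPT, i.e. a second optimum of
   an admissible perturbation.  For adjacent edges pq, qr of OPT, taking x = p,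
   y = r and the triangle inequality give (gamma - 1) w(pq) < w(qr).
   Let qr be the first edge on the path of OPT - ab from the endpoint q of ab
   on c's side towards c, p the other endpoint of ab.  Chaining the two
   inequalities across pq and qr gives gamma (gamma - 1) w(ab) < w(bc), against
   the hypothesis, unless q = b and r = c.  So bc is an edge of OPT adjacent
   to ab, and the adjacent-edge inequality applied both ways is the claim. *)

Lemma exists_minimizer (X : finType) (R : realDomainType) (P : X -> Prop)
    (f : X -> R) x0 :
  P x0 -> exists2 x, P x & forall y, P y -> f x <= f y.
Proof.
have [n] := ubnP #|[set y | f y < f x0]|.
elim: n x0 => // n IHn x lt_n Px.
have [[y [Py lt_yx]] | no_smaller] := classic (exists y, P y /\ f y < f x).
  apply: (IHn y) Py; rewrite -ltnS; apply: leq_trans lt_n.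
  apply: proper_card; apply/properP; split.
    by apply/subsetP => z; rewrite !inE => /lt_trans; apply.
  by exists y; rewrite !inE ?ltxx.
exists x => // y Py; rewrite leNgt; apply/negP => lt_yx.
by apply: no_smaller; exists y.
Qed.

Lemma metric_ge0 (R : realFieldType) (V : finType) (d : V -> V -> R) :
  is_metric d -> forall x y, 0 <= d x y.
Proof.
case=> d_eq0 d_sym d_tri x y; have := d_tri x y x.
by rewrite (d_sym y x) (proj2 (d_eq0 x x) erefl) => ?; lra.
Qed.

Section GraphConnectivity.
Variable V : finType.
Implicit Types (x y z u v p q : V) (e S : {set V}) (E F : {set {set V}}).

Lemma adj_sym E : symmetric (adj E).
Proof. by move=> x y; rewrite /adj setUC. Qed.

Lemma connect_adjC E x y : connect (adj E) x y = connect (adj E) y x.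
Proof. exact/sym_connect_sym/adj_sym. Qed.

Lemma connect_adj_sub E F : E \subset F -> subrel (connect (adj E)) (connect (adj F)).
Proof. by move=> sEF; apply: connect_sub => x y xy; apply/connect1/(subsetP sEF). Qed.

Lemma set2_neq_out x y e : x \notin e -> [set x; y] != e.
Proof. by apply: contraNneq => <-; rewrite set21. Qed.

Lemma adj_setD1 E e x y : adj E x y -> [set x; y] != e -> adj (E :\ e) x y.
Proof. by rewrite /adj in_setD1 => -> ->. Qed.

Lemma edge_endpoints (G : graph V) u v : is_graph G -> [set u; v] \in G.2 ->
  [/\ u != v, u \in G.1 & v \in G.1].
Proof.
move=> G_graph /G_graph[card_uv /subsetP sub_uv].
rewrite !sub_uv ?set21 ?set22 //.
by move: card_uv; rewrite cards2; case: (u != v).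
Qed.

Lemma connect_setD1_edge S E u v z : connected_graph (S, E) -> u \in S -> z \in S ->
  connect (adj (E :\ [set u; v])) z u || connect (adj (E :\ [set u; v])) z v.
Proof.
move=> E_conn uS zS; set E' := E :\ [set u; v].
have /connectP[p p_path ->] := E_conn u z uS zS.
rewrite !(connect_adjC E' (last u p)).
suff reach x : path (adj E) x p -> connect (adj E') u x || connect (adj E') v x ->
    connect (adj E') u (last x p) || connect (adj E') v (last x p).
  by apply: reach p_path _; rewrite connect0.
elim: p x {p_path} => [|y p IHp] x //= /andP[xy y_path] x_reach; apply: IHp y_path _.
have [xy_uv | xy_uv] := eqVneq [set x; y] [set u; v].
  have : y \in [set u; v] by rewrite -xy_uv set22.
  by rewrite in_set2 => /orP[]/eqP->; rewrite connect0 ?orbT.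
have /connect1 xy' : adj E' x y by apply: adj_setD1.
by case/orP: x_reach => reach; apply/orP; [left|right]; apply: connect_trans reach xy'.
Qed.

Lemma connected_exchange S E u v x y : is_graph (S, E) -> connected_graph (S, E) ->
    [set u; v] \in E ->
    connect (adj (E :\ [set u; v])) x u -> connect (adj (E :\ [set u; v])) y v ->
  connected_graph (S, [set x; y] |: (E :\ [set u; v])).
Proof.
move=> E_graph E_conn uv_E xu yv p q pS qS /=.
have [_ uS _] := edge_endpoints E_graph uv_E.
set E' := E :\ [set u; v]; set F := [set x; y] |: E'.
have lift := connect_adj_sub (subsetUr [set [set x; y]] E').
have vu : connect (adj F) v u.
  rewrite connect_adjC in yv; apply: connect_trans (lift _ _ yv) _.
  apply: connect_trans (_ : connect (adj F) y x) _.
    by apply: connect1; rewrite adj_sym /adj setU11.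
  exact: lift _ _ xu.
have to_u z : z \in S -> connect (adj F) z u.
  move=> zS; case/orP: (connect_setD1_edge v E_conn uS zS) => /lift // zv.
  exact: connect_trans zv vu.
by apply: connect_trans (to_u p pS) _; rewrite connect_adjC; apply: to_u.
Qed.

Lemma cycle_redundant_edge E s : uniq s -> (2 < size s)%N -> cycle (adj E) s ->
  exists2 e, e \in E & subrel (adj E) (connect (adj (E :\ e))).
Proof.
case: s => [|x0 [|x1 [|y t]]] //= uniq_s _.
rewrite rcons_path /= => /and4P[x01 x1y yt_path tx0].
set e := [set x0; x1]; exists e => //.
have out_e z : z \in y :: t -> z \notin e.
  move: uniq_s => /and3P[/norP[_ x0_yt] x1_yt _].
  by rewrite in_set2; apply: contraL => /orP[]/eqP->.
have keep p q : adj E p q -> p \in y :: t -> adj (E :\ e) p q.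
  by move=> pq /out_e p_e; apply: adj_setD1 pq (set2_neq_out _ p_e).
have x10 : connect (adj (E :\ e)) x1 x0.
  apply/connectP; exists (y :: rcons t x0); last by rewrite /= last_rcons.
  rewrite /= rcons_path; apply/and3P; split.
  - by rewrite adj_sym keep ?mem_head // adj_sym.
  - apply: (sub_in_path (P := mem (y :: t))) yt_path; last exact/allP.
    by move=> p q p_yt _ /keep; apply.
  - by apply: keep tx0 _; apply: mem_last.
move=> p q pq; have [pq_e | /(adj_setD1 pq)/connect1 //] := eqVneq [set p; q] e.
have /andP[] : (p \in e) && (q \in e) by rewrite -pq_e set21 set22.
by rewrite !in_set2 => /orP[]/eqP-> /orP[]/eqP->; rewrite ?connect0 // connect_adjC.
Qed.

Lemma connected_spanning_tree S F : is_graph (S, F) -> connected_graph (S, F) ->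
  S != set0 -> exists2 F0 : {set {set V}}, F0 \subset F & is_tree (S, F0).
Proof.
move=> F_graph F_conn S_ne.
have [F0 [F0_sub F0_conn] F0_min] := exists_minimizer
  (P := fun F1 : {set {set V}} => F1 \subset F /\ connected_graph (S, F1))
  (fun F1 => #|F1|%:Z) (conj (subxx F) F_conn).
exists F0 => //; split => //; first by move=> e /(subsetP F0_sub)/F_graph.
move=> s s_uniq s_size; apply/negP => /(cycle_redundant_edge s_uniq s_size)[e e_F0 e_red].
have /F0_min : F0 :\ e \subset F /\ connected_graph (S, F0 :\ e).
  split; first exact: subset_trans (subD1set F0 e) F0_sub.
  by move=> x y xS yS; apply: connect_sub (F0_conn x y xS yS).
by rewrite lez_nat (cardsD1 e F0) e_F0 ltnn.
Qed.

Lemma connect_first_edge E x z : x != z -> connect (adj E) x z ->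
  exists2 y, adj E x y & connect (adj (E :\ [set x; y])) y z.
Proof.
move=> xz /connectP[p p_path z_last]; rewrite {z}z_last in xz *.
case: (shortenP p_path) xz => [[|y p'] /=]; first by rewrite eqxx.
move=> /andP[xy p'_path] /andP[x_p' _] _ _; exists y => //.
apply/connectP; exists p' => //.
apply: (sub_in_path (P := predC1 x)) p'_path; last first.
  by apply/allP => w w_p'; apply: contraNneq x_p' => <-.
move=> w w'; rewrite !inE => wx w'x ww'; apply: adj_setD1 ww' _; rewrite eq_sym.
by apply: set2_neq_out; rewrite in_set2 negb_or !(eq_sym x) wx w'x.
Qed.

Lemma next_edge_toward E p q z : q != z -> connect (adj (E :\ [set p; q])) q z ->
  exists r, [/\ [set q; r] \in E, p != r & connect (adj (E :\ [set q; r])) z r].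
Proof.
move=> qz /(connect_first_edge qz)[r]; rewrite /adj in_setD1 => /andP[qr_pq qr_E] rz.
exists r; split => //; first by apply: contraNneq qr_pq => <-; rewrite setUC.
by rewrite connect_adjC; apply: connect_adj_sub rz; apply/setSD/subD1set.
Qed.

End GraphConnectivity.

Lemma sumr_le_subset (I : finType) (R : realDomainType) (f : I -> R) (A B : {set I}) :
  A \subset B -> {in B, forall i, 0 <= f i} -> \sum_(i in A) f i <= \sum_(i in B) f i.
Proof.
move=> sAB f_ge0; rewrite [X in _ <= X](big_setID A) /= (setIidPr sAB) lerDl.
by apply: sumr_ge0 => i; rewrite inE => /andP[_ /f_ge0].
Qed.

Lemma sumr_setU1_le (I : finType) (R : realDomainType) (f : I -> R) i (A : {set I}) :
  0 <= f i -> \sum_(j in i |: A) f j <= f i + \sum_(j in A) f j.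
Proof.
move=> fi_ge0; have [iA | iA] := boolP (i \in A); last by rewrite big_setU1.
by rewrite (setUidPr _) ?sub1set // lerDr.
Qed.

Lemma stable_opt_min_eq (R : realFieldType) (V : finType) (gamma : R) (Tm : {set V})
    (W W' : {set V} -> R) (OPT G : graph V) :
  stable_opt gamma Tm W OPT ->
  (forall e : {set V}, #|e| = 2%N -> W e <= W' e <= gamma * W e) ->
  steiner_tree Tm G -> weight W' G <= weight W' OPT -> G = OPT.
Proof.
move=> [[OPT_tree _] OPT_unique] W'_perturb G_tree G_light.
have [G0 G0_tree G0_min] := exists_minimizer (weight W') OPT_tree.
have G0_OPT : G0 = OPT := OPT_unique W' W'_perturb G0 (conj G0_tree G0_min).
apply: (OPT_unique W' W'_perturb); split => // G' /G0_min.
by rewrite G0_OPT; apply: le_trans.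
Qed.

Section StableInstance.
Variables (R : realFieldType) (V : finType) (d : V -> V -> R) (Tm : {set V})
  (W : {set V} -> R) (gamma : R) (S : {set V}) (E : {set {set V}}).
Hypotheses (d_metric : is_metric d)
  (W_d : forall u v : V, u != v -> W [set u; v] = d u v)
  (gamma_gt1 : 1 < gamma) (OPT_stable : stable_opt gamma Tm W (S, E)).

Let E_graph : is_graph (S, E).
Proof. by have [[[[]]]] := OPT_stable. Qed.

Let gamma_gt0 : 0 < gamma := lt_trans ltr01 gamma_gt1.

Lemma stable_exchange_lt u v x y :
    [set u; v] \in E -> x \in S -> y \in S -> x != y -> [set x; y] != [set u; v] ->
    connect (adj (E :\ [set u; v])) x u -> connect (adj (E :\ [set u; v])) y v ->
  gamma * d u v < d x y.
Proof.
move=> uv_E xS yS xy xy_uv xu yv.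
have [[[[_ S_ne E_conn _] Tm_S] _] _] := OPT_stable.
have [uv _ _] := edge_endpoints E_graph uv_E.
rewrite ltNge; apply/negP => dxy_le.
have W_ge0 (e : {set V}) : #|e| = 2%N -> 0 <= W e.
  by move/eqP/cards2P => [p [q [pq ->]]]; rewrite W_d // metric_ge0.
pose W' (e : {set V}) := if e == [set u; v] then gamma * W e else W e.
have W'_perturb (e : {set V}) : #|e| = 2%N -> W e <= W' e <= gamma * W e.
  move/W_ge0/ler_peMl/(_ (ltW gamma_gt1)) => le_W.
  by rewrite /W'; case: ifP; rewrite lexx le_W.
set F := [set x; y] |: (E :\ [set u; v]).
have F_graph : is_graph (S, F).
  move=> e /=; rewrite in_setU1 => /orP[/eqP-> | /setD1P[_ /E_graph] //].
  by rewrite cards2 xy subUset !sub1set xS yS.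
have W'_ge0 (e : {set V}) : e \in F -> 0 <= W' e.
  move=> /F_graph[e2 _]; apply: le_trans (W_ge0 _ e2) _.
  by case/andP: (W'_perturb _ e2).
have [F0 F0_sub F0_tree] := connected_spanning_tree F_graph
  (connected_exchange E_graph E_conn uv_E xu yv) S_ne.
have F0_light : weight W' (S, F0) <= weight W' (S, E).
  rewrite /weight /=; apply: le_trans (sumr_le_subset F0_sub W'_ge0) _.
  apply: le_trans (sumr_setU1_le (E :\ [set u; v]) (W'_ge0 _ (setU11 _ _))) _.
  by rewrite (big_setD1 _ uv_E) lerD2r /W' eqxx (negbTE xy_uv) !W_d.
have [] := stable_opt_min_eq OPT_stable W'_perturb (conj F0_tree Tm_S) F0_light.
move=> F0_E; have : [set u; v] \in F by rewrite (subsetP F0_sub) // F0_E.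
by rewrite in_setU1 eq_sym (negbTE xy_uv) in_setD1 eqxx.
Qed.

Lemma stable_adjacent_edges_lt p q r : [set p; q] \in E -> [set q; r] \in E -> p != r ->
  (gamma - 1) * d p q < d q r.
Proof.
move=> pq_E qr_E pr.
have [pq pS _] := edge_endpoints E_graph pq_E.
have [qr _ rS] := edge_endpoints E_graph qr_E.
have r_pq : r \notin [set p; q] by rewrite in_set2 negb_or !(eq_sym r) pr qr.
have rq : connect (adj (E :\ [set p; q])) r q.
  by apply/connect1/adj_setD1; [rewrite adj_sym | apply: set2_neq_out].
have pr_pq : [set p; r] != [set p; q] by rewrite setUC set2_neq_out.
have := stable_exchange_lt pq_E pS rS pr pr_pq (connect0 _ p) rq.
have [_ _ d_tri] := d_metric; move/lt_le_trans/(_ (d_tri p q r)).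
by rewrite mulrBl mul1r ltrBlDl.
Qed.

Lemma stable_far_vertex_lt p q z : [set p; q] \in E -> z \in S -> p != z -> q != z ->
    connect (adj (E :\ [set p; q])) q z ->
  gamma * (gamma - 1) * d p q < d p z.
Proof.
move=> pq_E zS pz qz /(next_edge_toward qz)[r [qr_E pr zr]].
have [pq pS _] := edge_endpoints E_graph pq_E.
have [qr _ _] := edge_endpoints E_graph qr_E.
have pz_qr : [set p; z] != [set q; r].
  by rewrite set2_neq_out // in_set2 negb_or pq pr.
have pq_conn : connect (adj (E :\ [set q; r])) p q.
  by apply/connect1/adj_setD1 => //; rewrite set2_neq_out // in_set2 negb_or pq pr.
have := stable_exchange_lt qr_E pS zS pz pz_qr pq_conn zr.
rewrite -mulrA; apply: lt_trans.
by rewrite ltr_pM2l // stable_adjacent_edges_lt.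
Qed.

Lemma stable_near_vertex_lt p q z : [set p; q] \in E -> z \in S -> q != z ->
    [set q; z] \notin E -> connect (adj (E :\ [set p; q])) q z ->
  gamma * (gamma - 1) * d p q < d q z.
Proof.
move=> pq_E zS qz qz_E /(next_edge_toward qz)[r [qr_E pr zr]].
have [_ _ qS] := edge_endpoints E_graph pq_E.
have qz_qr : [set q; z] != [set q; r].
  rewrite setUC set2_neq_out // in_set2 negb_or eq_sym qz.
  by apply: contraNneq qz_E => ->.
have := stable_exchange_lt qr_E qS zS qz qz_qr (connect0 _ q) zr.
rewrite -mulrA; apply: lt_trans.
by rewrite ltr_pM2l // stable_adjacent_edges_lt.
Qed.

End StableInstance.

Theorem mainTheorem3 (R : realFieldType) (V : finType) (d : V -> V -> R)
    (Tm : {set V}) (W : {set V} -> R) (gamma : R)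
    (OPT H : graph V) (a b c : V) :
  is_metric d ->
  (forall u v : V, u != v -> W [set u; v] = d u v) ->
  1 < gamma ->
  stable_opt gamma Tm W OPT ->
  subgraph H OPT ->
  H.2 != set0 ->
  [set a; b] \in H.2 ->
  c \in OPT.1 -> c \notin H.1 ->
  d b c < gamma * (gamma - 1) * d a b ->
  d b c < d a b / (gamma - 1) /\ d a b < d b c / (gamma - 1).
Proof.
move=> d_metric W_d gamma_gt1 OPT_stable [H_graph H_V H_E] _ ab_H cV c_H bc_lt.
case: OPT OPT_stable H_V H_E cV => S E OPT_stable /= H_S H_E cS.
have [[[[_ _ E_conn _] _] _] _] := OPT_stable.
have [_ aH bH] := edge_endpoints H_graph ab_H.
have ab_E : [set a; b] \in E := subsetP H_E _ ab_H.
have [ac bc] : a != c /\ b != c by split; apply: contraNneq c_H => <-.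
have [_ d_sym _] := d_metric.
have adjacent_lt := stable_adjacent_edges_lt d_metric W_d gamma_gt1 OPT_stable.
have gamma1_gt0 : 0 < gamma - 1 by rewrite subr_gt0.
rewrite !ltr_pdivlMr // ![_ * (gamma - 1)]mulrC.
have ba_E : [set b; a] \in E by rewrite setUC.
case/orP: (connect_setD1_edge b E_conn (subsetP H_S _ aH) cS) => [ca | cb].
  have ac_conn : connect (adj (E :\ [set b; a])) a c by rewrite setUC connect_adjC.
  have := stable_far_vertex_lt d_metric W_d gamma_gt1 OPT_stable ba_E cS bc ac ac_conn.
  by rewrite (d_sym b a) => /lt_trans/(_ bc_lt); rewrite ltxx.
have [bc_E | bc_nE] := boolP ([set b; c] \in E).
  split; last exact: adjacent_lt ab_E bc_E ac.
  have cb_E : [set c; b] \in E by rewrite setUC.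
  by rewrite d_sym (d_sym a) adjacent_lt // eq_sym.
have bc_conn : connect (adj (E :\ [set a; b])) b c by rewrite connect_adjC.
have := stable_near_vertex_lt d_metric W_d gamma_gt1 OPT_stable ab_E cS bc bc_nE bc_conn.
by move=> /lt_trans/(_ bc_lt); rewrite ltxx.
Qed.
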